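(* Let $p$ be a prime, $a\in\mathbb{Q}_p$, $a\ne0$, with $\sqrt{-a}\in\mathbb{Q}_p$, $A=|a|_p$, and $f(x)=\frac{ax}{x^2+a}$ on $\mathbb{Q}_p$. Let $0<r<\sqrt A$, $\rho(r)=r^3/A$, and $c\in\mathbb{Q}_p$ with $|c|_p=r$. Then: 1. $|f^{n+1}(c)-f^n(c)|_p=\rho(r)$ for every $n\ge1$. 2. $f(V_{\rho(r)}(c))=V_{\rho(r)}(c)$. 3. If for some $\theta>0$ the ball $V_\theta(c)\subset S_r(0)$ is invariant under $f$ (i.e. $f(V_\theta(c))\subseteq V_\theta(c)$), then $\theta\ge\rho(r)$.
   Context: $V_\theta(c)=\{x\in\mathbb{Q}_p:|x-c|_p\le\theta\}$, $S_r(0)=\{x\in\mathbb{Q}_p:|x|_p=r\}$; $f^n$ is the $n$-th iterate of $f$. *)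

From Stdlib Require Import Reals ZArith.
From HB Require Import structures.
From mathcomp Require Import all_boot all_order all_algebra.
Set Implicit Arguments. Unset Strict Implicit. Unset Printing Implicit Defensive.
Import GRing.Theory.

Definition rat_pval (p : nat) (q : rat) : Z :=
  Z.sub (Z.of_nat (logn p `|numq q|%N)) (Z.of_nat (logn p `|denq q|%N)).

Definition padic_abs_rat (p : nat) (q : rat) : R :=
  if q == 0%R then R0 else powerRZ (INR p) (Z.opp (rat_pval p q)).

(* (K, nrm) is "the" field Q_p of p-adic numbers with its absolute value
   |.|_p, characterised as the completion of Q w.r.t. |.|_p: a field with a
   non-archimedean absolute value restricting to |.|_p on Q, complete, and in
   which Q is dense.  These properties determine (K, nrm) up to unique
   isometric isomorphism. *)
Definition is_Qp (p : nat) (K : fieldType) (nrm : K -> R) : Prop :=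
    (forall x : K, nrm x = R0 <-> x = 0%R) /\
      (forall x y : K, nrm (x * y)%R = Rmult (nrm x) (nrm y)) /\
      (forall x y : K, Rle (nrm (x + y)%R) (Rmax (nrm x) (nrm y))) /\
      (forall q : rat, nrm (ratr q) = padic_abs_rat p q) /\
      (forall u : nat -> K,
          (forall eps : R, Rlt R0 eps -> exists N : nat, forall m n : nat,
             (N <= m)%N -> (N <= n)%N -> Rlt (nrm (u m - u n)%R) eps) ->
          exists l : K, (forall eps : R, Rlt R0 eps -> exists N : nat,
             forall n : nat, (N <= n)%N -> Rlt (nrm (u n - l)%R) eps)) /\
      (forall (x : K) (eps : R), Rlt R0 eps ->
          exists q : rat, Rlt (nrm (x - ratr q)%R) eps).

Definition fmap (K : fieldType) (a : K) (x : K) : K :=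
  (a * x / (x ^+ 2 + a))%R.

Definition fiter (K : fieldType) (a : K) (n : nat) (c : K) : K :=
  iter n (fmap a) c.

Definition ball (K : fieldType) (nrm : K -> R) (theta : R) (c : K) : K -> Prop :=
  fun x => Rle (nrm (x - c)%R) theta.

Definition sphere0 (K : fieldType) (nrm : K -> R) (r : R) : K -> Prop :=
  fun x => nrm x = r.

Definition has_sqrt_neg (K : fieldType) (a : K) : Prop :=
  exists s : K, (s * s)%R = (- a)%R.

Definition is_nonzero (K : fieldType) (a : K) : Prop := a <> 0%R.
Arguments is_Qp p K nrm : clear implicits.

From Stdlib Require Import Reals Lra.
From mathcomp Require Import all_boot all_order all_algebra.
From mathcomp Require Import ring.
Import GRing.Theory.
Set Implicit Arguments. Unset Strict Implicit.
Open Scope R_scope.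

(* On the sphere |x| = r we have |x^2| < |a|, hence |x^2 + a| = |a|, and
   f(x) = x - h(x) with h(x) = x^3 / (x^2 + a) of norm exactly rho = r^3/|a| < r.
   So f moves every point of S_r(0) by exactly rho and keeps it on the sphere:
   this gives part 1, the inclusion f(V_rho(c)) <= V_rho(c), and part 3 by
   looking at the single point c.  Moreover h is a contraction of ratio
   r^2/|a| < 1 on S_r(0), so for y in V_rho(c) the map x |-> y + h(x) has a
   fixed point in V_rho(c) (Banach), which is a preimage of y under f. *)

Record ultrametric_abs (K : fieldType) (nrm : K -> R) : Prop := UltrametricAbs {
  abs_eq0 : forall x : K, nrm x = 0 <-> x = 0%R;
  absM : forall x y : K, nrm (x * y)%R = nrm x * nrm y;
  abs_ultra : forall x y : K, nrm (x + y)%R <= Rmax (nrm x) (nrm y);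
  absN1 : nrm (-1)%R = 1 }.

Section Ultrametric.

Variables (K : fieldType) (nrm : K -> R).
Hypothesis nrm_abs : ultrametric_abs nrm.

Let nrm_eq0 := abs_eq0 nrm_abs.
Let nrmM := absM nrm_abs.
Let nrm_ultra := abs_ultra nrm_abs.
Let nrmN1 := absN1 nrm_abs.

Lemma nrm0 : nrm 0%R = 0.
Proof. exact/nrm_eq0. Qed.

Lemma nrmN (x : K) : nrm (- x)%R = nrm x.
Proof. by rewrite -mulN1r nrmM nrmN1 Rmult_1_l. Qed.

Lemma nrm_ge0 (x : K) : 0 <= nrm x.
Proof.
have := nrm_ultra x (- x)%R; rewrite addrN nrm0 nrmN.
by rewrite /Rmax; case: Rle_dec; lra.
Qed.

Lemma distC (x y : K) : nrm (x - y)%R = nrm (y - x)%R.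
Proof. by rewrite -nrmN opprB. Qed.

Lemma nrm1 : nrm 1%R = 1.
Proof. by rewrite -[1%R]opprK -mulN1r nrmM nrmN1 Rmult_1_l. Qed.

Lemma nrmV (x : K) : x != 0%R -> nrm (x^-1)%R = / nrm x.
Proof.
move=> x_neq0; have nx_neq0 : nrm x <> 0 by move/nrm_eq0; apply/eqP.
apply: (Rmult_eq_reg_l (nrm x)) => //.
by rewrite -nrmM mulfV // nrm1 Rinv_r.
Qed.

Lemma nrmX (x : K) (n : nat) : nrm (x ^+ n)%R = nrm x ^ n.
Proof. by elim: n => [|n IH]; rewrite ?expr0 ?nrm1 // exprS nrmM IH. Qed.

Lemma nrmD_le (x y : K) (b : R) : nrm x <= b -> nrm y <= b -> nrm (x + y)%R <= b.
Proof. by have := nrm_ultra x y; rewrite /Rmax; case: Rle_dec; lra. Qed.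

Lemma nrmD_lt (x y : K) (b : R) : nrm x < b -> nrm y < b -> nrm (x + y)%R < b.
Proof. by have := nrm_ultra x y; rewrite /Rmax; case: Rle_dec; lra. Qed.

Lemma nrmD_absorb (x y : K) : nrm x < nrm y -> nrm (x + y)%R = nrm y.
Proof.
move=> lt_xy; have le_sum := nrm_ultra x y.
have := nrm_ultra (x + y)%R (- x)%R; rewrite addrC addKr nrmN.
by move: le_sum; rewrite /Rmax; do 2 case: Rle_dec; lra.
Qed.

Definition cauchy (u : nat -> K) : Prop :=
  forall eps, 0 < eps -> exists N : nat, forall m n : nat,
    (N <= m)%N -> (N <= n)%N -> nrm (u m - u n)%R < eps.

Definition converges_to (u : nat -> K) (l : K) : Prop :=
  forall eps, 0 < eps -> exists N : nat, forall n : nat,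
    (N <= n)%N -> nrm (u n - l)%R < eps.

Lemma geometric_telescope (u : nat -> K) (k C : R) :
  0 <= k <= 1 -> (forall n, nrm (u n.+1 - u n)%R <= k ^ n * C) ->
  forall n d, nrm (u (n + d)%N - u n)%R <= k ^ n * C.
Proof.
move=> k01 step n; have C_ge0 : 0 <= C.
  by have := step 0%N; have := nrm_ge0 (u 1%N - u 0%N)%R; rewrite /= Rmult_1_l; lra.
have pow_le1 d : k ^ d <= 1 by elim: d => [|d IH] /=; nra.
have kn_ge0 := pow_le k n (proj1 k01).
elim=> [|d IH]; first by rewrite addn0 addrN nrm0; nra.
have -> : (u (n + d.+1)%N - u n = (u (n + d).+1 - u (n + d)%N) + (u (n + d)%N - u n))%R.
  by rewrite addnS; ring.
apply: nrmD_le IH; apply: Rle_trans (step _) _.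
rewrite pow_add; have := pow_le1 d; have := Rmult_le_pos _ _ kn_ge0 C_ge0; nra.
Qed.

Lemma cauchy_geometric (u : nat -> K) (k C : R) :
  0 <= k < 1 -> 0 < C -> (forall n, nrm (u n.+1 - u n)%R <= k ^ n * C) -> cauchy u.
Proof.
move=> k01 C_gt0 step eps eps_gt0.
have tele := geometric_telescope (conj (proj1 k01) (Rlt_le _ _ (proj2 k01))) step.
have abs_k_lt1 : Rabs k < 1 by rewrite Rabs_right; lra.
have [N kN_small] := pow_lt_1_zero k abs_k_lt1 (eps / C) (Rdiv_lt_0_compat _ _ eps_gt0 C_gt0).
have small n : (N <= n)%N -> k ^ n * C < eps.
  move=> /leP /kN_small; rewrite Rabs_right; last exact/Rle_ge/pow_le/(proj1 k01).
  by move=> lt_kn; apply: (Rmult_lt_reg_r (/ C)); [exact: Rinv_0_lt_compat | field_simplify; lra].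
exists N => m n Nm Nn; case: (leqP m n) => [le_mn | /ltnW lt_nm].
  by rewrite distC -(subnKC le_mn); apply: Rle_lt_trans (tele _ _) (small _ Nm).
by rewrite -(subnKC lt_nm); apply: Rle_lt_trans (tele _ _) (small _ Nn).
Qed.

Lemma limit_in_ball (u : nat -> K) (l c : K) (rho : R) :
  converges_to u l -> (forall n, nrm (u n - c)%R <= rho) -> nrm (l - c)%R <= rho.
Proof.
move=> u_to_l u_ball; case: (Rle_lt_dec (nrm (l - c)%R) rho) => // far.
have [|N near] := u_to_l (nrm (l - c)%R - rho); first lra.
have u_near := near N (leqnn N); have uN_ball := u_ball N.
have rho_ge0 : 0 <= rho by apply: Rle_trans uN_ball; exact: nrm_ge0.
have : nrm (- (u N - l) + (u N - c))%R < nrm (l - c)%R.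
  by apply: nrmD_lt; rewrite ?nrmN; lra.
have -> : (- (u N - l) + (u N - c) = l - c)%R by ring.
lra.
Qed.

Hypothesis nrm_complete : forall u, cauchy u -> exists l, converges_to u l.

Lemma contraction_fixpoint (g : K -> K) (c : K) (rho k : R) :
  0 < rho -> 0 <= k < 1 ->
  (forall x, nrm (x - c)%R <= rho -> nrm (g x - c)%R <= rho) ->
  (forall x y, nrm (x - c)%R <= rho -> nrm (y - c)%R <= rho ->
     nrm (g x - g y)%R <= k * nrm (x - y)%R) ->
  exists2 l, nrm (l - c)%R <= rho & g l = l.
Proof.
move=> rho_gt0 k01 g_ball g_contr; pose u n := iter n g c.
have u_ball n : nrm (u n - c)%R <= rho.
  by elim: n => [|n IH] /=; [rewrite addrN nrm0; lra | exact: g_ball].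
have u_step n : nrm (u n.+1 - u n)%R <= k ^ n * rho.
  elim: n => [|n IH]; first by rewrite /= Rmult_1_l; apply/g_ball; rewrite addrN nrm0; lra.
  apply: Rle_trans (g_contr (u n.+1) (u n) (u_ball _) (u_ball _)) _.
  rewrite /= Rmult_assoc.
  by apply: Rmult_le_compat_l IH; lra.
have [l u_to_l] := nrm_complete (cauchy_geometric k01 rho_gt0 u_step).
have l_ball := limit_in_ball u_to_l u_ball.
exists l => //; apply/eqP; rewrite -subr_eq0; apply/eqP/nrm_eq0.
case: (nrm_ge0 (g l - l)%R) => [gap|] //; have [N near] := u_to_l _ gap.
have near_N := near N (leqnn N).
have : nrm ((g l - g (u N)) + (u N.+1 - l))%R < nrm (g l - l)%R.
  apply: nrmD_lt; last exact/near/leqW.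
  apply: Rle_lt_trans (g_contr _ _ l_ball (u_ball _)) (Rle_lt_trans _ _ _ _ near_N).
  by rewrite (distC l) -{2}[nrm _]Rmult_1_l; apply: Rmult_le_compat_r; [exact: nrm_ge0 | lra].
have -> : ((g l - g (u N)) + (u N.+1 - l) = g l - l)%R by rewrite /u /=; ring.
lra.
Qed.

Section RationalMap.

Variables (a : K) (r : R).
Hypotheses (r_gt0 : 0 < r) (r2_lt_nrm_a : r * r < nrm a).

Local Notation k := (r * r / nrm a).
Local Notation rho := (r ^ 3 / nrm a).

Definition correction (x : K) : K := (x ^+ 3 / (x ^+ 2 + a))%R.

Lemma nrm_a_gt0 : 0 < nrm a.
Proof. nra. Qed.

Lemma ratio_bounds : 0 < k < 1.
Proof.
have A_gt0 := nrm_a_gt0; split; first exact/Rdiv_lt_0_compat/A_gt0/Rmult_lt_0_compat.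
apply: (Rmult_lt_reg_r (nrm a)) => //.
by rewrite Rmult_1_l /Rdiv Rmult_assoc Rinv_l; lra.
Qed.

Lemma rho_bounds : 0 < rho < r.
Proof.
have A_gt0 := nrm_a_gt0.
have -> : rho = r * k by field_simplify_eq; lra.
by have [k_gt0 k_lt1] := ratio_bounds; nra.
Qed.

Lemma nrm_den (x : K) : nrm x = r -> nrm (x ^+ 2 + a)%R = nrm a.
Proof. by move=> nx; apply: nrmD_absorb; rewrite nrmX nx /=; nra. Qed.

Lemma den_neq0 (x : K) : nrm x = r -> (x ^+ 2 + a)%R != 0%R.
Proof.
move=> nx; apply/eqP => /nrm_eq0 den0.
by have := nrm_den nx; have := nrm_a_gt0; lra.
Qed.

Lemma fmap_correction (x : K) : nrm x = r -> fmap a x = (x - correction x)%R.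
Proof. by move=> nx; rewrite /fmap /correction; field; exact: den_neq0. Qed.

Lemma nrm_correction (x : K) : nrm x = r -> nrm (correction x) = rho.
Proof. by move=> nx; rewrite nrmM nrmV ?den_neq0 // nrm_den // nrmX nx. Qed.

Lemma correction_lipschitz (x y : K) : nrm x = r -> nrm y = r ->
  nrm (correction x - correction y)%R <= k * nrm (x - y)%R.
Proof.
move=> nx ny; have A_gt0 := nrm_a_gt0.
pose B := (x ^+ 2 * y ^+ 2 + a * (x ^+ 2 + x * y + y ^+ 2))%R.
have -> : (correction x - correction y = (x - y) * B / ((x ^+ 2 + a) * (y ^+ 2 + a)))%R.
  by rewrite /correction /B; field; rewrite !den_neq0.
have nB : nrm B <= nrm a * (r * r).
  apply: nrmD_le; first by rewrite nrmM !nrmX nx ny /=; nra.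
  rewrite nrmM; apply: Rmult_le_compat_l; first lra.
  by do 2?apply: nrmD_le; rewrite ?nrmM ?nrmX ?nx ?ny /=; lra.
rewrite !nrmM nrmV ?mulf_neq0 ?den_neq0 // nrmM !nrm_den //.
have -> : k * nrm (x - y)%R = nrm (x - y)%R * (nrm a * (r * r)) * / (nrm a * nrm a).
  by field_simplify_eq; lra.
apply: Rmult_le_compat_r; first by apply/Rlt_le/Rinv_0_lt_compat; nra.
by apply: Rmult_le_compat_l nB; exact: nrm_ge0.
Qed.

Lemma nrm_fmap_sub (x : K) : nrm x = r -> nrm (fmap a x - x)%R = rho.
Proof.
move=> nx; rewrite fmap_correction //.
rewrite (_ : x - correction x - x = - correction x)%R; last by ring.
by rewrite nrmN nrm_correction.
Qed.

Lemma nrm_fmap (x : K) : nrm x = r -> nrm (fmap a x) = r.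
Proof.
move=> nx; have -> : fmap a x = (fmap a x - x + x)%R by rewrite subrK.
rewrite nrmD_absorb // nrm_fmap_sub // nx.
exact: (proj2 rho_bounds).
Qed.

Lemma nrm_fiter (c : K) (n : nat) : nrm c = r -> nrm (fiter a n c) = r.
Proof. by move=> nc; elim: n => [|n IH] //=; apply: nrm_fmap. Qed.

Variable c : K.
Hypothesis nc : nrm c = r.

Lemma ball_in_sphere (x : K) : nrm (x - c)%R <= rho -> nrm x = r.
Proof.
move=> x_ball; have -> : x = (x - c + c)%R by rewrite subrK.
rewrite nrmD_absorb nc //.
by have [_ rho_lt_r] := rho_bounds; lra.
Qed.

Lemma fmap_ball (x : K) : nrm (x - c)%R <= rho -> nrm (fmap a x - c)%R <= rho.
Proof.
move=> x_ball; have nx := ball_in_sphere x_ball.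
rewrite fmap_correction //.
rewrite (_ : x - correction x - c = - correction x + (x - c))%R; last by ring.
by apply: nrmD_le x_ball; rewrite nrmN nrm_correction //; lra.
Qed.

Lemma fmap_ball_onto (y : K) : nrm (y - c)%R <= rho ->
  exists2 x, nrm (x - c)%R <= rho & fmap a x = y.
Proof.
move=> y_ball.
have [l l_ball fix_l] : exists2 l, nrm (l - c)%R <= rho & (y + correction l = l)%R.
  apply: (@contraction_fixpoint (fun x => y + correction x)%R c rho k).
  - exact: (proj1 rho_bounds).
  - by have [k_gt0 k_lt1] := ratio_bounds; lra.
  - move=> x x_ball; rewrite (_ : y + correction x - c = (y - c) + correction x)%R; last by ring.
    by apply: nrmD_le y_ball _; rewrite (nrm_correction (ball_in_sphere x_ball)); lra.
  - move=> x x' x_ball x'_ball.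
    rewrite (_ : y + correction x - (y + correction x') = correction x - correction x')%R;
      last by ring.
    by apply: correction_lipschitz; exact: ball_in_sphere.
by exists l; rewrite // (fmap_correction (ball_in_sphere l_ball)) -{1}fix_l addrK.
Qed.

End RationalMap.

End Ultrametric.

Lemma padic_abs_ratN1 (p : nat) : padic_abs_rat p (-1)%R = 1.
Proof. by rewrite /padic_abs_rat /rat_pval /= logn1. Qed.

Lemma Qp_ultrametric_abs (p : nat) (K : fieldType) (nrm : K -> R) :
  is_Qp p K nrm -> ultrametric_abs nrm.
Proof.
case=> nrm_eq0 [nrmM [nrm_ultra [nrm_ratr _]]]; split => //.
have ratrN1 : ratr (-1) = (-1 : K)%R by have := ratr_int K (-1); rewrite intrN.
by rewrite -ratrN1 nrm_ratr padic_abs_ratN1.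
Qed.

Theorem theorem3p4 (p : nat) (K : fieldType) (nrm : K -> R)
  (hp : prime p) (hK : is_Qp p K nrm)
  (a : K) (ha : is_nonzero a) (hsq : has_sqrt_neg a)
  (r : R) (hr0 : Rlt R0 r) (hr : Rlt r (sqrt (nrm a)))
  (c : K) (hc : nrm c = r) :
  let A := nrm a in
  let rho := Rdiv (pow r 3) A in
  let f := fmap a in
  [/\ (forall n : nat, (1 <= n)%N ->
          nrm (fiter a n.+1 c - fiter a n c)%R = rho),
      (forall x : K, ball nrm rho c x -> ball nrm rho c (f x)) /\
      (forall y : K, ball nrm rho c y -> exists x : K, ball nrm rho c x /\ f x = y) &
      (forall theta : R, Rlt R0 theta ->
          (forall x : K, ball nrm theta c x -> sphere0 nrm r x) ->
          (forall x : K, ball nrm theta c x -> ball nrm theta c (f x)) ->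
          Rle rho theta)].
Proof.
move=> A rho f; have nrm_abs := Qp_ultrametric_abs hK.
have [_ [_ [_ [_ [nrm_complete _]]]]] := hK.
have r2_lt : r * r < nrm a.
  by apply: sqrt_lt_0_alt; rewrite sqrt_square //; lra.
split.
- by move=> n _; apply: (nrm_fmap_sub nrm_abs r2_lt); apply: nrm_fiter.
- split=> [x | y y_ball]; first exact: fmap_ball.
  by have [x] := fmap_ball_onto nrm_abs nrm_complete hr0 r2_lt hc y_ball; exists x.
- move=> theta theta_gt0 _ f_inv.
  have := f_inv c; rewrite /ball (nrm_fmap_sub nrm_abs r2_lt hc).
  by rewrite addrN (nrm0 nrm_abs); apply; lra.
Qed.
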